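(* Let $T=(\{T_g\}_{g\in G},\{\gamma_{g,h}\}_{g,h\in G},u)$ be an action of a group $G$ on a semigroupal category $\mathcal{C}$, let $\mathcal{I}$ be an ideal of $\mathcal{C}$, and for each $g\in G$ put $\mathcal{C}_g=\mathcal{I}\cap\overline{T_g(\mathcal{I})}$. Then (1) $\mathcal{C}_e=\mathcal{I}$; (2) $T_g(\mathcal{C}_{g^{-1}}\cap\mathcal{C}_h)\subseteq\mathcal{C}_g\cap\mathcal{C}_{gh}$ for all $g,h\in G$; (3) $\overline{T_g(\mathcal{C}_{g^{-1}}\cap\mathcal{C}_h)}=\mathcal{C}_g\cap\mathcal{C}_{gh}$ for all $g,h\in G$.
   Context: A semigroupal category is a (strict) category with a tensor product functor and associator satisfying the pentagon axiom. An action of a group $G$ (unit $e$) on $\mathcal{C}$ consists of semigroupal auto-equivalences $T_g$ of $\mathcal{C}$, natural isomorphisms of semigroupal functors $\gamma_{g,h}\colon T_gT_h\Rightarrow T_{gh}$ and $u\colon\mathrm{Id}_{\mathcal{C}}\Rightarrow T_e$, with $(\gamma_{gh,k})_X\circ(\gamma_{g,h})_{T_k(X)}=(\gamma_{g,hk})_X\circ T_g((\gamma_{h,k})_X)$, and with $u_{T_g(X)}$, $(\gamma_{e,g})_X$ mutually inverse and $T_g(u_X)$, $(\gamma_{g,e})_X$ mutually inverse. For a subcategory $\mathcal{D}$, $\overline{\mathcal{D}}$ denotes the smallest subcategory of $\mathcal{C}$ containing $\mathcal{D}$ and closed under isomorphisms (with each of its objects $X$ and each isomorphism $\varphi\colon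 X\to X'$ in $\mathcal{C}$, it contains $X'$ and $\varphi$). An ideal of $\mathcal{C}$ is a subcategory closed under isomorphisms such that $X\otimes Y$ and $Y\otimes X$ are objects of it whenever $X$ is an object of it and $Y$ is any object of $\mathcal{C}$. Intersections of subcategories are taken on objects and morphisms; $T_g(\mathcal{D})$ is the image subcategory. *)

Set Implicit Arguments.
Unset Strict Implicit.

Record Group := {
  gcar :> Type;
  gmul : gcar -> gcar -> gcar;
  gone : gcar;
  ginv : gcar -> gcar;
  gmulA : forall a b c, gmul a (gmul b c) = gmul (gmul a b) c;
  gmul1l : forall a, gmul gone a = a;
  gmul1r : forall a, gmul a gone = a;
  gmulVl : forall a, gmul (ginv a) a = gone;
  gmulVr : forall a, gmul a (ginv a) = gone }.

Record Category := {
  ob :> Type;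
  hom : ob -> ob -> Type;
  comp : forall X Y Z, hom Y Z -> hom X Y -> hom X Z;
  idm : forall X, hom X X;
  compA : forall X Y Z W (h : hom Z W) (g : hom Y Z) (f : hom X Y),
      comp h (comp g f) = comp (comp h g) f;
  comp1l : forall X Y (f : hom X Y), comp (idm Y) f = f;
  comp1r : forall X Y (f : hom X Y), comp f (idm X) = f }.

Arguments hom {c} _ _.
Arguments comp {c X Y Z} _ _.
Arguments idm {c} _.

Definition is_iso (C : Category) (X Y : C) (f : hom X Y) : Prop :=
  exists g : hom Y X, comp g f = idm X /\ comp f g = idm Y.

Record Functor (C : Category) := {
  fob :> C -> C;
  fmap : forall X Y, hom X Y -> hom (fob X) (fob Y);
  fmap_id : forall X, fmap (idm X) = idm (fob X);
  fmap_comp : forall X Y Z (g : hom Y Z) (f : hom X Y),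
      fmap (comp g f) = comp (fmap g) (fmap f) }.
Arguments fmap {C} _ {X Y} _.

Definition nat_iso (C : Category) (F G : C -> C)
  (Fm : forall X Y, hom X Y -> hom (F X) (F Y))
  (Gm : forall X Y, hom X Y -> hom (G X) (G Y))
  (eta : forall X, hom (F X) (G X)) : Prop :=
  (forall X Y (f : hom X Y), comp (eta Y) (Fm X Y f) = comp (Gm X Y f) (eta X)) /\
  (forall X, is_iso (eta X)).

Definition is_equivalence (C : Category) (F : Functor C) : Prop :=
  exists (H : Functor C)
         (eps : forall X, hom (H (F X)) X) (eta : forall X, hom (F (H X)) X),
    @nat_iso C (fun X => H (F X)) (fun X => X)
            (fun X Y f => fmap H (fmap F f)) (fun X Y f => f) eps /\
    @nat_iso C (fun X => F (H X)) (fun X => X)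
            (fun X Y f => fmap F (fmap H f)) (fun X Y f => f) eta.

Record SemigroupalCategory := {
  scat :> Category;
  tens : scat -> scat -> scat;
  tensm : forall X X' Y Y', hom X X' -> hom Y Y' -> hom (tens X Y) (tens X' Y');
  tensm_id : forall X Y, tensm (idm X) (idm Y) = idm (tens X Y);
  tensm_comp : forall X X' X'' Y Y' Y'' (f' : hom X' X'') (f : hom X X')
      (g' : hom Y' Y'') (g : hom Y Y'),
      tensm (comp f' f) (comp g' g) = comp (tensm f' g') (tensm f g);
  assoc : forall X Y Z, hom (tens (tens X Y) Z) (tens X (tens Y Z));
  assoc_iso : forall X Y Z, is_iso (assoc X Y Z);
  assoc_nat : forall X X' Y Y' Z Z' (f : hom X X') (g : hom Y Y') (h : hom Z Z'),
      comp (assoc X' Y' Z') (tensm (tensm f g) h)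
      = comp (tensm f (tensm g h)) (assoc X Y Z);
  pentagon : forall W X Y Z,
      comp (assoc W X (tens Y Z)) (assoc (tens W X) Y Z)
      = comp (tensm (idm W) (assoc X Y Z))
          (comp (assoc W (tens X Y) Z) (tensm (assoc W X Y) (idm Z))) }.

Arguments tens {s} _ _.
Arguments tensm {s X X' Y Y'} _ _.
Arguments assoc {s} _ _ _.

Record SgFunctor (C : SemigroupalCategory) := {
  sgf :> Functor C;
  sgJ : forall X Y : C, hom (tens (sgf X) (sgf Y)) (sgf (tens X Y));
  sgJ_iso : forall X Y, is_iso (sgJ X Y);
  sgJ_nat : forall X X' Y Y' (f : hom X X') (g : hom Y Y'),
      comp (sgJ X' Y') (tensm (fmap sgf f) (fmap sgf g))
      = comp (fmap sgf (tensm f g)) (sgJ X Y);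
  sgJ_assoc : forall X Y Z,
      comp (fmap sgf (assoc X Y Z)) (comp (sgJ (tens X Y) Z) (tensm (sgJ X Y) (idm (sgf Z))))
      = comp (sgJ X (tens Y Z)) (comp (tensm (idm (sgf X)) (sgJ Y Z))
                                      (assoc (sgf X) (sgf Y) (sgf Z))) }.
Arguments sgJ {C} s X Y.

Definition sg_nat_iso (C : SemigroupalCategory) (F G : C -> C)
  (Fm : forall X Y, hom X Y -> hom (F X) (F Y))
  (Gm : forall X Y, hom X Y -> hom (G X) (G Y))
  (JF : forall X Y, hom (tens (F X) (F Y)) (F (tens X Y)))
  (JG : forall X Y, hom (tens (G X) (G Y)) (G (tens X Y)))
  (eta : forall X, hom (F X) (G X)) : Prop :=
  nat_iso Fm Gm eta /\
  (forall X Y, comp (eta (tens X Y)) (JF X Y) = comp (JG X Y) (tensm (eta X) (eta Y))).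

Definition cast_tgt (C : Category) (X Y Y' : C) (e : Y = Y') (f : hom X Y) : hom X Y' :=
  match e in _ = w return hom X w with eq_refl => f end.

Definition mutually_inverse (C : Category) (X Y : C) (f : hom X Y) (g : hom Y X) : Prop :=
  comp g f = idm X /\ comp f g = idm Y.

Record GroupAction (G : Group) (C : SemigroupalCategory) := {
  act : G -> SgFunctor C;
  act_equiv : forall g, is_equivalence (act g);
  gam : forall (g h : G) (X : C), hom (act g (act h X)) (act (gmul g h) X);
  unt : forall X : C, hom X (act (gone G) X);
  (* gamma_{g,h} : T_g T_h => T_{gh} is a natural iso of semigroupal functors,
     T_g T_h carrying the composite structure T_g(J^h) o J^g *)
  gam_sg_iso : forall g h : G,
      @sg_nat_iso C (fun X => act g (act h X)) (act (gmul g h))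
        (fun X Y f => fmap (act g) (fmap (act h) f))
        (fun X Y f => fmap (act (gmul g h)) f)
        (fun X Y => comp (fmap (act g) (sgJ (act h) X Y)) (sgJ (act g) (act h X) (act h Y)))
        (sgJ (act (gmul g h)))
        (gam g h);
  unt_sg_iso :
      @sg_nat_iso C (fun X => X) (act (gone G))
        (fun X Y f => f) (fun X Y f => fmap (act (gone G)) f)
        (fun X Y => idm (tens X Y)) (sgJ (act (gone G))) unt;
  gam_cocycle : forall (g h k : G) (X : C),
      comp (gam (gmul g h) k X) (gam g h (act k X))
      = cast_tgt (f_equal (fun w => act w X) (gmulA g h k))
          (comp (gam g (gmul h k) X) (fmap (act g) (gam h k X)));
  unit_left : forall (g : G) (X : C),
      mutually_inverse (unt (act g X))
        (cast_tgt (f_equal (fun w => act w X) (gmul1l g)) (gam (gone G) g X));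
  unit_right : forall (g : G) (X : C),
      mutually_inverse (fmap (act g) (unt X))
        (cast_tgt (f_equal (fun w => act w X) (gmul1r g)) (gam g (gone G) X)) }.

Arguments act {G C} _ _.

Definition Mor (C : Category) := { X : C & { Y : C & hom X Y } }.
Definition mkMor (C : Category) (X Y : C) (f : hom X Y) : Mor C :=
  existT _ X (existT _ Y f).
Definition src (C : Category) (m : Mor C) : C := projT1 m.
Definition tgt (C : Category) (m : Mor C) : C := projT1 (projT2 m).

Record subcat (C : Category) := { sob : C -> Prop; smor : Mor C -> Prop }.
Arguments sob {C} _ _.
Arguments smor {C} _ _.

Definition is_subcat (C : Category) (D : subcat C) : Prop :=
  (forall m, smor D m -> sob D (src m) /\ sob D (tgt m)) /\
  (forall X, sob D X -> smor D (mkMor (idm X))) /\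
  (forall X Y Z (g : hom Y Z) (f : hom X Y),
      smor D (mkMor f) -> smor D (mkMor g) -> smor D (mkMor (comp g f))).

Definition closed_iso (C : Category) (D : subcat C) : Prop :=
  forall X X' (phi : hom X X'), sob D X -> is_iso phi ->
    sob D X' /\ smor D (mkMor phi).

Definition incl (C : Category) (D E : subcat C) : Prop :=
  (forall X, sob D X -> sob E X) /\ (forall m, smor D m -> smor E m).

Definition eq_sub (C : Category) (D E : subcat C) : Prop := incl D E /\ incl E D.

Definition inter (C : Category) (D E : subcat C) : subcat C :=
  {| sob X := sob D X /\ sob E X; smor m := smor D m /\ smor E m |}.

(** overline D : the smallest subcategory containing D and closed under isos *)
Definition closure (C : Category) (D : subcat C) : subcat C :=
  {| sob X := forall S, is_subcat S -> closed_iso S -> incl D S -> sob S X;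
     smor m := forall S, is_subcat S -> closed_iso S -> incl D S -> smor S m |}.

Definition fmor (C : Category) (F : Functor C) (m : Mor C) : Mor C :=
  mkMor (fmap F (projT2 (projT2 m))).

Definition image (C : Category) (F : Functor C) (D : subcat C) : subcat C :=
  {| sob X := exists X0, sob D X0 /\ F X0 = X;
     smor m := exists m0, smor D m0 /\ fmor F m0 = m |}.

Definition is_ideal (C : SemigroupalCategory) (I : subcat C) : Prop :=
  is_subcat I /\ closed_iso I /\
  (forall X Y : C, sob I X -> sob I (tens X Y) /\ sob I (tens Y X)).


(* A subcategory closed under isomorphisms cannot tell naturally isomorphic
   functors apart, so on such subcategories (and on preimages of them) T_e acts
   as the identity and T_a T_b as T_(ab).  For X in C_(g^-1) /\ C_h this gives
   T_g X in I (as X lies in the closure of T_(g^-1)(I) and T_g T_(g^-1) ~ Id),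
   T_g X in closure(T_g(I)) and T_g X in closure(T_(gh)(I)), which is (2).
   Applying (2) to g^-1 and gh and using X ~ T_g T_(g^-1) X gives the reverse
   inclusion in (3). *)

Section GroupFacts.

Context {G : Group}.

Lemma gmulKg (a b : G) : gmul (ginv a) (gmul a b) = b.
Proof. rewrite gmulA, gmulVl, gmul1l. reflexivity. Qed.

Lemma ginvK (a : G) : ginv (ginv a) = a.
Proof.
  rewrite <- (gmul1r (ginv (ginv a))), <- (gmulVl a), gmulA, gmulVl, gmul1l.
  reflexivity.
Qed.

End GroupFacts.

Section Subcategories.

Context {C : Category}.
Implicit Types D E S : subcat C.

Lemma incl_refl D : incl D D.
Proof. split; intros x Hx; exact Hx. Qed.

Lemma incl_trans D E S : incl D E -> incl E S -> incl D S.
Proof. intros [HDo HDm] [HEo HEm]. split; auto. Qed.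

Lemma inter_inclL D E : incl (inter D E) D.
Proof. split; intros x [Hx _]; exact Hx. Qed.

Lemma inter_inclR D E : incl (inter D E) E.
Proof. split; intros x [_ Hx]; exact Hx. Qed.

Lemma incl_inter D E S : incl D E -> incl D S -> incl D (inter E S).
Proof. intros [HEo HEm] [HSo HSm]. split; split; auto. Qed.

Lemma inter_is_subcat D E : is_subcat D -> is_subcat E -> is_subcat (inter D E).
Proof.
  intros [D1 [D2 D3]] [E1 [E2 E3]]. split; [|split].
  - intros m [HD HE]. destruct (D1 m HD), (E1 m HE). split; split; assumption.
  - intros X [HD HE]. split; auto.
  - intros X Y Z g f [HfD HfE] [HgD HgE]. split; auto.
Qed.

Lemma inter_closed_iso D E : closed_iso D -> closed_iso E -> closed_iso (inter D E).
Proof.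
  intros HD HE X X' phi [HXD HXE] Hphi.
  destruct (HD X X' phi HXD Hphi), (HE X X' phi HXE Hphi). split; split; assumption.
Qed.

Lemma closure_is_subcat D : is_subcat (closure D).
Proof.
  split; [|split].
  - intros m Hm. split; intros S HS Hc Hi; apply (proj1 HS m (Hm S HS Hc Hi)).
  - intros X HX S HS Hc Hi. apply (proj1 (proj2 HS)), HX; assumption.
  - intros X Y Z g f Hf Hg S HS Hc Hi. apply (proj2 (proj2 HS)).
    + apply Hf; assumption.
    + apply Hg; assumption.
Qed.

Lemma closure_closed_iso D : closed_iso (closure D).
Proof.
  intros X X' phi HX Hphi.
  split; intros S HS Hc Hi; apply (Hc X X' phi (HX S HS Hc Hi) Hphi).
Qed.

Lemma incl_closure D : incl D (closure D).
Proof. split; intros x Hx S HS Hc Hi; apply Hi, Hx. Qed.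

Lemma closure_min D S : is_subcat S -> closed_iso S -> incl D S -> incl (closure D) S.
Proof. intros HS Hc Hi. split; intros x Hx; apply Hx; assumption. Qed.

End Subcategories.

Section IsoTransport.

Context {C : Category} {S : subcat C}.
Hypotheses (HS : is_subcat S) (Hc : closed_iso S).

Lemma sob_iso {X X' : C} {a : hom X X'} : is_iso a -> sob S X <-> sob S X'.
Proof.
  intros Ha. split; intros HX; [exact (proj1 (Hc X X' a HX Ha))|].
  destruct Ha as [a' [Ha'a Haa']].
  exact (proj1 (Hc X' X a' HX (ex_intro _ a (conj Haa' Ha'a)))).
Qed.

Lemma smor_iso_conj {X X' Y Y' : C} {a : hom X X'} {b : hom Y Y'}
    {f : hom X Y} {f' : hom X' Y'} :
  is_iso a -> is_iso b -> comp b f = comp f' a ->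
  smor S (mkMor f) -> smor S (mkMor f').
Proof.
  intros Ha Hb Hsq Hf.
  destruct (proj1 HS _ Hf) as [HX HY]. simpl in HX, HY.
  destruct Ha as [a' [Ha'a Haa']].
  assert (Ha' : is_iso a') by (exists a; split; assumption).
  assert (HX' : sob S X') by exact (proj1 (Hc X X' a HX (ex_intro _ a' (conj Ha'a Haa')))).
  assert (Hf' : comp b (comp f a') = f').
  { rewrite compA, Hsq, <- compA, Haa', comp1r. reflexivity. }
  rewrite <- Hf'. apply (proj2 (proj2 HS)); [apply (proj2 (proj2 HS))|].
  - exact (proj2 (Hc X' X a' HX' Ha')).
  - exact Hf.
  - exact (proj2 (Hc Y Y' b HY Hb)).
Qed.

Lemma comm_square_inv {X X' Y Y' : C} {a : hom X X'} {a' : hom X' X}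
    {b : hom Y Y'} {b' : hom Y' Y} {f : hom X Y} {f' : hom X' Y'} :
  comp a a' = idm X' -> comp b' b = idm Y ->
  comp b f = comp f' a -> comp b' f' = comp f a'.
Proof.
  intros Haa' Hb'b Hsq.
  rewrite <- (comp1r f'), <- Haa', (compA f' a a'), <- Hsq, <- (compA b f a'),
    (compA b' b), Hb'b, comp1l.
  reflexivity.
Qed.

Lemma nat_iso_sob {F F' : C -> C} {Fm Fm'} {eta : forall X, hom (F X) (F' X)} :
  nat_iso Fm Fm' eta -> forall X, sob S (F X) <-> sob S (F' X).
Proof. intros Heta X. exact (sob_iso (proj2 Heta X)). Qed.

Lemma nat_iso_smor {F F' : C -> C} {Fm Fm'} {eta : forall X, hom (F X) (F' X)} :
  nat_iso Fm Fm' eta ->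
  forall X Y (f : hom X Y), smor S (mkMor (Fm X Y f)) <-> smor S (mkMor (Fm' X Y f)).
Proof.
  intros [Hnat Hiso] X Y f.
  pose proof (Hiso X) as HisoX. pose proof (Hiso Y) as HisoY.
  destruct (Hiso X) as [eX' [HX1 HX2]], (Hiso Y) as [eY' [HY1 HY2]].
  split; intros Hf.
  - exact (smor_iso_conj HisoX HisoY (Hnat X Y f) Hf).
  - apply (smor_iso_conj (a := eX') (b := eY') (f := Fm' X Y f)); [| | | exact Hf].
    + exists (eta X). split; assumption.
    + exists (eta Y). split; assumption.
    + exact (comm_square_inv HX2 HY1 (Hnat X Y f)).
Qed.

End IsoTransport.

Section Preimages.

Context {C : Category}.
Implicit Types (F : Functor C) (D E S : subcat C).

Definition preimage F S : subcat C :=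
  {| sob X := sob S (F X); smor m := smor S (fmor F m) |}.

Lemma image_incl_preimage F D E : incl (image F D) E <-> incl D (preimage F E).
Proof.
  split.
  - intros [Ho Hm]. split.
    + intros X HX. apply Ho. exists X. split; [exact HX | reflexivity].
    + intros m Hmm. apply Hm. exists m. split; [exact Hmm | reflexivity].
  - intros [Ho Hm]. split.
    + intros X [X0 [HX0 <-]]. exact (Ho X0 HX0).
    + intros m [m0 [Hm0 <-]]. exact (Hm m0 Hm0).
Qed.

Lemma preimage_incl F D E : incl D E -> incl (preimage F D) (preimage F E).
Proof. intros [Ho Hm]. split; intros x Hx; [apply Ho | apply Hm]; exact Hx. Qed.

Lemma incl_preimage_closure_image F D : incl D (preimage F (closure (image F D))).
Proof. apply image_incl_preimage, incl_closure. Qed.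

Lemma fmap_is_iso F {X Y : C} {f : hom X Y} : is_iso f -> is_iso (fmap F f).
Proof.
  intros [g [Hgf Hfg]]. exists (fmap F g).
  rewrite <- !fmap_comp, Hgf, Hfg, !fmap_id. split; reflexivity.
Qed.

Lemma preimage_is_subcat F S : is_subcat S -> is_subcat (preimage F S).
Proof.
  intros [S1 [S2 S3]]. split; [|split].
  - intros m Hm. exact (S1 _ Hm).
  - intros X HX. change (smor S (mkMor (fmap F (idm X)))).
    rewrite fmap_id. exact (S2 _ HX).
  - intros X Y Z g f Hf Hg. change (smor S (mkMor (fmap F (comp g f)))).
    rewrite fmap_comp. exact (S3 _ _ _ _ _ Hf Hg).
Qed.

Lemma preimage_closed_iso F S : closed_iso S -> closed_iso (preimage F S).
Proof. intros Hc X X' phi HX Hphi. exact (Hc _ _ _ HX (fmap_is_iso F Hphi)). Qed.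

Lemma closure_image_incl_preimage F F' D S :
  is_subcat S -> closed_iso S -> incl D (preimage F (preimage F' S)) ->
  incl (closure (image F D)) (preimage F' S).
Proof.
  intros HS Hc HD. apply closure_min.
  - apply preimage_is_subcat, HS.
  - apply preimage_closed_iso, Hc.
  - apply image_incl_preimage, HD.
Qed.

End Preimages.

Section Action.

Context {G : Group} {C : SemigroupalCategory} (T : GroupAction G C).

Lemma preimage_act_one {S : subcat C} :
  is_subcat S -> closed_iso S -> eq_sub (preimage (act T (gone G)) S) S.
Proof.
  intros HS Hc. pose proof (proj1 (unt_sg_iso T)) as Hu.
  split; split.
  - intros X. apply (nat_iso_sob Hc Hu X).
  - intros [X [Y f]]. apply (nat_iso_smor HS Hc Hu X Y f).
  - intros X. apply (nat_iso_sob Hc Hu X).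
  - intros [X [Y f]]. apply (nat_iso_smor HS Hc Hu X Y f).
Qed.

Lemma preimage_act_mul {S : subcat C} (a b : G) :
  is_subcat S -> closed_iso S ->
  eq_sub (preimage (act T a) (preimage (act T b) S)) (preimage (act T (gmul b a)) S).
Proof.
  intros HS Hc. pose proof (proj1 (gam_sg_iso T b a)) as Hg.
  split; split.
  - intros X. apply (nat_iso_sob Hc Hg X).
  - intros [X [Y f]]. apply (nat_iso_smor HS Hc Hg X Y f).
  - intros X. apply (nat_iso_sob Hc Hg X).
  - intros [X [Y f]]. apply (nat_iso_smor HS Hc Hg X Y f).
Qed.

Lemma closure_image_act_inv (S : subcat C) (a b : G) :
  is_subcat S -> closed_iso S -> gmul b a = gone G ->
  incl (closure (image (act T a) S)) (preimage (act T b) S).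
Proof.
  intros HS Hc Hba. apply closure_image_incl_preimage; [exact HS | exact Hc |].
  apply incl_trans with (preimage (act T (gmul b a)) S).
  - rewrite Hba. apply (preimage_act_one HS Hc).
  - apply (preimage_act_mul a b HS Hc).
Qed.

Lemma closure_image_act_mul (D : subcat C) (a b : G) :
  incl (closure (image (act T a) D))
       (preimage (act T b) (closure (image (act T (gmul b a)) D))).
Proof.
  apply closure_image_incl_preimage;
    [apply closure_is_subcat | apply closure_closed_iso |].
  apply incl_trans with (preimage (act T (gmul b a)) (closure (image (act T (gmul b a)) D))).
  - apply incl_preimage_closure_image.
  - apply (preimage_act_mul a b (closure_is_subcat _) (closure_closed_iso _)).
Qed.

Variable I : subcat C.
Hypotheses (HI : is_subcat I) (HIc : closed_iso I).

Definition Cg (g : G) : subcat C := inter I (closure (image (act T g) I)).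

Lemma Cg_is_subcat g : is_subcat (Cg g).
Proof. apply inter_is_subcat; [exact HI | apply closure_is_subcat]. Qed.

Lemma Cg_closed_iso g : closed_iso (Cg g).
Proof. apply inter_closed_iso; [exact HIc | apply closure_closed_iso]. Qed.

Lemma Cg_one : eq_sub (Cg (gone G)) I.
Proof.
  split; [apply inter_inclL|].
  apply incl_inter; [apply incl_refl|].
  apply incl_trans with (preimage (act T (gone G)) (closure (image (act T (gone G)) I))).
  - apply incl_preimage_closure_image.
  - apply (preimage_act_one (closure_is_subcat _) (closure_closed_iso _)).
Qed.

Lemma Cg_inv_incl_preimage g : incl (Cg (ginv g)) (preimage (act T g) I).
Proof.
  apply incl_trans with (closure (image (act T (ginv g)) I)); [apply inter_inclR|].
  apply closure_image_act_inv; [exact HI | exact HIc | apply gmulVr].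
Qed.

Lemma Cg_act g h :
  incl (image (act T g) (inter (Cg (ginv g)) (Cg h))) (inter (Cg g) (Cg (gmul g h))).
Proof.
  assert (HI_g : incl (inter (Cg (ginv g)) (Cg h)) (preimage (act T g) I)).
  { apply incl_trans with (Cg (ginv g)); [apply inter_inclL | apply Cg_inv_incl_preimage]. }
  apply incl_inter; apply incl_inter; apply image_incl_preimage.
  - exact HI_g.
  - apply incl_trans with I.
    + apply incl_trans with (Cg (ginv g)); apply inter_inclL.
    + apply incl_preimage_closure_image.
  - exact HI_g.
  - apply incl_trans with (closure (image (act T h) I)).
    + apply incl_trans with (Cg h); apply inter_inclR.
    + apply closure_image_act_mul.
Qed.

Lemma closure_Cg_act g h :
  eq_sub (closure (image (act T g) (inter (Cg (ginv g)) (Cg h))))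
         (inter (Cg g) (Cg (gmul g h))).
Proof.
  set (D := inter (Cg (ginv g)) (Cg h)).
  split.
  - apply closure_min.
    + apply inter_is_subcat; apply Cg_is_subcat.
    + apply inter_closed_iso; apply Cg_closed_iso.
    + apply Cg_act.
  - pose proof (Cg_act (ginv g) (gmul g h)) as Hinv.
    rewrite ginvK, gmulKg in Hinv. fold D in Hinv.
    pose proof (preimage_act_mul (ginv g) g (closure_is_subcat (image (act T g) D))
                  (closure_closed_iso _)) as Hmul.
    rewrite gmulVr in Hmul.
    apply incl_trans with (preimage (act T (ginv g)) D);
      [apply image_incl_preimage, Hinv|].
    apply incl_trans with (preimage (act T (gone G)) (closure (image (act T g) D))).
    + apply incl_trans with (2 := proj1 Hmul).
      apply preimage_incl, incl_preimage_closure_image.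
    + apply (preimage_act_one (closure_is_subcat _) (closure_closed_iso _)).
Qed.

End Action.

Theorem lemma3p1 (G : Group) (C : SemigroupalCategory) (T : GroupAction G C)
  (I : subcat C) (hI : is_ideal I) :
  let Cg := fun g : G => inter I (closure (image (act T g) I)) in
  eq_sub (Cg (gone G)) I /\
  (forall g h : G,
      incl (image (act T g) (inter (Cg (ginv g)) (Cg h)))
           (inter (Cg g) (Cg (gmul g h)))) /\
  (forall g h : G,
      eq_sub (closure (image (act T g) (inter (Cg (ginv g)) (Cg h))))
             (inter (Cg g) (Cg (gmul g h)))).
Proof.
  intros Cg. destruct hI as [HI [HIc _]].
  split; [|split]; [| intros g h ..].
  - exact (Cg_one T I).
  - exact (Cg_act T I HI HIc g h).
  - exact (closure_Cg_act T I HI HIc g h).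
Qed.
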